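(* For all $n,m\ge1$, $c_n\,c_m\le c_{n+m}$. More precisely, the map $\mathcal C_n(321)\times\mathcal C_m(321)\to\mathcal C_{n+m}(321)$, $(\tau,\sigma)\mapsto\theta^{-1}(\hat\tau\odot\hat\sigma)$, is injective.
   Context: Permutations are written in one-line notation. A permutation contains $321$ if there are $i<j<k$ with $\pi_i>\pi_j>\pi_k$. $\mathcal C_n$ is the set of cyclic permutations of $[n]$, $\mathcal C_n(321)$ those avoiding $321$, and $c_n=|\mathcal C_n(321)|$. The standard cycle notation of $\pi$ writes each cycle with its largest element first, as $(m,\pi(m),\pi^2(m),\dots)$, and lists cycles in increasing order of their largest elements. $\theta:S_n\to S_n$ erases the parentheses of the standard cycle notation to give a one-line word; $\hat\pi=\theta(\pi)$. For $\sigma\in\mathcal C_n(321)$, $\tau\in\mathcal C_m(321)$ and $k$ with $\hat\tau_k=1$: $\hat\tau\odot\hat\sigma=(\hat\tau_1+n)\cdots(\hat\tau_k+n)\,\hat\sigma_1\cdots\hat\sigma_n\,(\hat\tau_{k+1}+n)\cdots(\hat\tau_m+n)$; it is known (and may be used) that $\theta^{-1}(\hat\tau\odot\hat\sigma)\in\mathcal C_{n+m}(321)$. *)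

(* Permutations of [n] = {1,...,n} are represented in one-line notation as
   sequences s : seq nat with perm_eq s (iota 1 n); pi(i) = s_i. *)
From mathcomp Require Import all_boot.
Set Implicit Arguments. Unset Strict Implicit. Unset Printing Implicit Defensive.

Definition is_perm (n : nat) (s : seq nat) : bool := perm_eq s (iota 1 n).

Definition papp (s : seq nat) (i : nat) : nat := nth 0 s i.-1.

Definition cyclicb (n : nat) (s : seq nat) : bool :=
  is_perm n s &&
  all (fun j => has (fun k => iter k (papp s) 1 == j) (iota 0 n)) (iota 1 n).

Definition contains321 (s : seq nat) : bool :=
  has (fun i => has (fun j => has (fun k =>
         [&& i < j, j < k, nth 0 s j < nth 0 s i & nth 0 s k < nth 0 s j])
       (iota 0 (size s))) (iota 0 (size s))) (iota 0 (size s)).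

Definition avoids321 (s : seq nat) : bool := ~~ contains321 s.

Definition C321 (n : nat) (s : seq nat) : bool := cyclicb n s && avoids321 s.

Definition c (n : nat) : nat := count (C321 n) (permutations (iota 1 n)).

Definition cyc_len (s : seq nat) (x : nat) : nat :=
  (find (fun k => iter k.+1 (papp s) x == x) (iota 0 (size s))).+1.

Definition cyc (s : seq nat) (x : nat) : seq nat :=
  traject (papp s) x (cyc_len s x).

Definition cyc_max (s : seq nat) (x : nat) : bool :=
  all (fun y => y <= x) (cyc s x).

(* standard cycle notation, parentheses erased: each cycle starts with its
   largest element; cycles listed by increasing largest elements *)
Definition theta (s : seq nat) : seq nat :=
  flatten [seq cyc s x | x <- iota 1 (size s) & cyc_max s x].

(* --- theta^{-1}: cut the word before each left-to-right maximum --- *)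

(* maximum of the first i+1 letters of w (the current cycle's leader) *)
Definition premax (w : seq nat) (i : nat) : nat := foldr maxn 0 (take i.+1 w).

Definition theta_inv_next (w : seq nat) (i : nat) : nat :=
  if (i.+1 < size w) && (nth 0 w i.+1 < premax w i)
  then nth 0 w i.+1 else premax w i.

Definition theta_inv (w : seq nat) : seq nat :=
  [seq theta_inv_next w (index x w) | x <- iota 1 (size w)].

Definition odot (th sh : seq nat) : seq nat :=
  let n := size sh in
  let k := (index 1 th).+1 in
  [seq t + n | t <- take k th] ++ sh ++ [seq t + n | t <- drop k th].

Definition glue (tau sigma : seq nat) : seq nat :=
  theta_inv (odot (theta tau) (theta sigma)).

(* For a cyclic permutation the standard cycle notation is a single cycle, so theta s is
   the orbit (n, s(n), s^2(n), ...) of the maximum; conversely theta^-1 of a word that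
   starts with its maximum is the permutation cycling through that word.  The word
   tau^ (.) sigma^ is a permutation of [n+m] starting with n+m, so glue tau sigma is one
   cycle: from n+m along the cycle of tau shifted by n until 1+n, then around the cycle
   of sigma from n, then along the rest of the cycle of tau.  Its one-line notation is thus
   explicit: sigma with n replaced by tau(1)+n, then n, then tau(2)+n, ..., tau(m)+n.
   A 321 pattern of this word lies either among its first n letters, which are
   order-isomorphic to sigma, or among its letters above n, which spell tau shifted by n;
   and sigma and tau can be read back off the word, whence injectivity. *)

From mathcomp Require Import all_boot zify.
Set Implicit Arguments. Unset Strict Implicit. Unset Printing Implicit Defensive.

Lemma find_iota (P : pred nat) k N : k < N -> P k -> (forall i, i < k -> ~~ P i) ->
  find P (iota 0 N) = k.
Proof.
move=> kN Pk nP; have -> : N = k + (N - k).-1.+1 by lia.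
rewrite iotaD add0n /= find_cat.
have -> : has P (iota 0 k) = false by apply/hasPn => i; rewrite mem_iota => /nP.
by rewrite size_iota /= addnC Pk.
Qed.

Section Trajectories.
Variables (T : eqType) (f : T -> T).

Lemma drop_traject k n x : k <= n -> drop k (traject f x n) = traject f (iter k f x) (n - k).
Proof.
by move=> kn; rewrite -{1}(subnKC kn) trajectD drop_size_cat // size_traject.
Qed.

Lemma fcycle_trajectE x n : 0 < n -> fcycle f (traject f x n) = (iter n f x == x).
Proof.
by case: n => [//|n] _; rewrite trajectS /= rcons_path fpath_traject last_traject.
Qed.

Lemma fcycle_consE x q : fcycle f (x :: q) -> x :: q = traject f x (size q).+1.
Proof.
rewrite /= rcons_path => /andP[/fpathE Dq _].
by rewrite {1}Dq.
Qed.

Lemma rot_fcycle_traject p x : fcycle f p -> x \in p ->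
  exists i, rot i p = traject f x (size p).
Proof.
move=> fp /rot_to[i q Dq]; exists i; rewrite -(size_rot i) Dq.
by apply: fcycle_consE; rewrite -Dq rot_cycle.
Qed.

Lemma perm_traject_fcycle p x : fcycle f p -> x \in p -> perm_eq (traject f x (size p)) p.
Proof. by move=> fp /(rot_fcycle_traject fp)[i <-]; rewrite perm_rot. Qed.

Lemma iter_fcycle p x : fcycle f p -> x \in p -> iter (size p) f x = x.
Proof.
move=> fp px; have [i Dp] := rot_fcycle_traject fp px.
apply/eqP; rewrite -fcycle_trajectE -?Dp ?rot_cycle //.
by case: p px {fp Dp}.
Qed.
End Trajectories.

Section Conjugation.
Variables (T U : Type) (f : U -> U) (g : T -> T) (h : T -> U).

Lemma iter_conj x k : (forall i, i < k -> f (h (iter i g x)) = h (iter i.+1 g x)) ->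
  iter k f (h x) = h (iter k g x).
Proof. by elim: k => // k IH fgh; rewrite iterS IH ?fgh // => i /ltnW/fgh. Qed.

Lemma traject_conj x k : (forall i, i.+1 < k -> f (h (iter i g x)) = h (iter i.+1 g x)) ->
  traject f (h x) k = map h (traject g x k).
Proof.
elim: k x => // k IH x fgh; rewrite !trajectS /=; congr (_ :: _).
case: k IH fgh => [//|k] IH fgh; rewrite (fgh 0) // IH // => i ik.
by rewrite -!iterSr fgh.
Qed.
End Conjugation.

Section OneLine.
Variables (n : nat) (s : seq nat).
Hypothesis s_perm : is_perm n s.

Lemma size_is_perm : size s = n.
Proof. by rewrite (perm_size s_perm) size_iota. Qed.

Lemma uniq_is_perm : uniq s.
Proof. by rewrite (perm_uniq s_perm) iota_uniq. Qed.

Lemma mem_is_perm x : (x \in s) = (0 < x <= n).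
Proof. by rewrite (perm_mem s_perm) mem_iota; lia. Qed.

Lemma nth_is_perm q : q < n -> 0 < nth 0 s q <= n.
Proof. by move=> qn; rewrite -mem_is_perm mem_nth ?size_is_perm. Qed.

Lemma papp_is_perm x : 0 < x <= n -> 0 < papp s x <= n.
Proof. by move=> xn; apply: nth_is_perm; lia. Qed.

Lemma papp_inj_is_perm x y : 0 < x <= n -> 0 < y <= n -> papp s x = papp s y -> x = y.
Proof.
move=> xn yn /eqP; rewrite /papp nth_uniq ?size_is_perm ?uniq_is_perm => [/eqP|||]; lia.
Qed.

Lemma iter_is_perm k x : 0 < x <= n -> 0 < iter k (papp s) x <= n.
Proof. by move=> xn; elim: k => //= k; apply: papp_is_perm. Qed.
End OneLine.

Lemma cyclicbP n s :
  reflect (is_perm n s /\ {subset iota 1 n <= traject (papp s) 1 n}) (cyclicb n s).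
Proof.
apply: (iffP andP) => -[sP orb]; split=> //.
- move=> j /(allP orb) /hasP[k]; rewrite mem_iota => kn /eqP <-.
  by apply/trajectP; exists k.
- by apply/allP=> j /orb /trajectP[k kn ->]; apply/hasP; exists k; rewrite ?mem_iota.
Qed.

Section Cyclic.
Variables (n : nat) (s : seq nat).
Hypotheses (s_cyc : cyclicb n s) (n_gt0 : 0 < n).
Let f := papp s.
Let s_perm : is_perm n s. Proof. by case/cyclicbP: s_cyc. Qed.

Lemma perm_traject1_cyclic : perm_eq (traject f 1 n) (iota 1 n).
Proof.
have [_ orb] := cyclicbP _ _ s_cyc.
have szT : size (traject f 1 n) <= size (iota 1 n) by rewrite size_traject size_iota.
have [sz eqT] := uniq_min_size (iota_uniq 1 n) orb szT.
rewrite perm_sym uniq_perm ?iota_uniq //.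
by rewrite (uniq_size_uniq (iota_uniq 1 n) eqT) sz.
Qed.

Lemma iter_cyclic1 : iter n f 1 = 1.
Proof.
have uT := perm_uniq perm_traject1_cyclic; rewrite iota_uniq in uT.
have inT k : 0 < iter k f 1 <= n by apply: iter_is_perm; lia.
have := inT n; rewrite -(mem_is_perm perm_traject1_cyclic) => /trajectP[[//|k] kn].
rewrite -(prednK n_gt0) !iterS => /(papp_inj_is_perm s_perm (inT _) (inT _)) /eqP.
rewrite -(nth_traject _ (_ : n.-1 < n)) -?(nth_traject _ (_ : k < n)); try lia.
by rewrite nth_uniq ?size_traject //; lia.
Qed.

Let fcycle_cyclic : fcycle f (traject f 1 n).
Proof. by rewrite fcycle_trajectE ?iter_cyclic1. Qed.

Let mem_traject1 x : 0 < x <= n -> x \in traject f 1 n.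
Proof. by rewrite (mem_is_perm perm_traject1_cyclic). Qed.

Lemma perm_traject_cyclic x : 0 < x <= n -> perm_eq (traject f x n) (iota 1 n).
Proof.
move=> /mem_traject1 xT; apply: perm_trans perm_traject1_cyclic.
by have := perm_traject_fcycle fcycle_cyclic xT; rewrite size_traject.
Qed.

Lemma iter_cyclic x : 0 < x <= n -> iter n f x = x.
Proof.
by move=> /mem_traject1 xT; have := iter_fcycle fcycle_cyclic xT; rewrite size_traject.
Qed.

Lemma cyc_len_cyclic x : 0 < x <= n -> cyc_len s x = n.
Proof.
move=> xn; have uT := perm_uniq (perm_traject_cyclic xn); rewrite iota_uniq in uT.
rewrite /cyc_len (size_is_perm s_perm) (@find_iota _ n.-1) ?prednK //; try lia.
  by rewrite iter_cyclic.
move=> i ilt; rewrite -(nth_traject _ (_ : i.+1 < n)); last lia.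
rewrite -[x in _ != x](nth_traject f n_gt0) nth_uniq ?size_traject //; lia.
Qed.

Lemma cyc_max_cyclic x : 0 < x <= n -> cyc_max s x = (x == n).
Proof.
move=> xn; rewrite /cyc_max /cyc cyc_len_cyclic //.
rewrite -/f; apply/allP/eqP => [/(_ n)|xE y]; rewrite (mem_is_perm (perm_traject_cyclic xn)).
- by rewrite n_gt0 leqnn; lia.
- lia.
Qed.

Lemma theta_cyclic : theta s = traject f n n.
Proof.
rewrite /theta (size_is_perm s_perm) (eq_in_filter (a2 := pred1 n)); last first.
  by move=> x; rewrite mem_iota => xn; apply: cyc_max_cyclic; lia.
have nn : 0 < n <= n by rewrite n_gt0 leqnn.
rewrite filter_pred1_uniq ?iota_uniq ?mem_iota //.
have -> : traject f n n = cyc s n by rewrite /cyc cyc_len_cyclic.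
exact: cats0.
Qed.
End Cyclic.

Section ThetaInv.
Variables (N : nat) (W : seq nat).
Hypotheses (W_perm : perm_eq W (iota 1 N)) (W_head : head 0 W = N).

Lemma premax_head i : premax W i = N.
Proof.
have leN y : y \in take i.+1 W -> y <= N.
  by move/mem_take; rewrite (mem_is_perm W_perm); lia.
rewrite /premax (_ : foldr _ _ _ = \max_(y <- take i.+1 W) y); last by rewrite unlock.
apply/eqP; rewrite eqn_leq; apply/andP; split.
  by apply/bigmax_leqP_seq => y /leN.
case: W W_head leN => [<- //|y W'] /= -> _.
by rewrite big_cons leq_maxl.
Qed.

Lemma size_theta_inv : size (theta_inv W) = N.
Proof. by rewrite size_map size_iota (size_is_perm W_perm). Qed.

Lemma fcycle_theta_inv : fcycle (papp (theta_inv W)) W.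
Proof.
have Wu := uniq_is_perm W_perm.
apply: cycle_from_next => // x xW; apply/eqP; rewrite next_nth xW.
have xN := xW; rewrite (mem_is_perm W_perm) in xN.
rewrite /papp /theta_inv (nth_map 0) ?size_iota ?(size_is_perm W_perm); last lia.
rewrite nth_iota; last lia.
rewrite add1n prednK; last lia.
rewrite /theta_inv_next premax_head.
case: W W_perm W_head Wu xW => [//|y W'] yP yN /andP[yW' _] _.
have {}yN : y = N := yN.
set i := index x (y :: W').
rewrite /= ltnS; have [iW'|iW'] := ltnP i (size W').
- rewrite (set_nth_default 0) //.
  have : nth 0 W' i \in y :: W' by rewrite inE mem_nth ?orbT.
  rewrite (mem_is_perm yP) => iN; rewrite ifT //.
  suff : nth 0 W' i != y by lia.
  by apply: contraNneq yW' => <-; rewrite mem_nth.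
- by rewrite [RHS]nth_default // yN.
Qed.
End ThetaInv.

Section CycleOneLine.
Variables (N : nat) (W : seq nat).
Hypothesis W_perm : perm_eq W (iota 1 N).

Let iotaW : iota 1 N =i W.
Proof. by move=> x; rewrite (mem_is_perm W_perm) mem_iota; lia. Qed.

Lemma eq_oneline_fcycle s1 s2 : size s1 = N -> size s2 = N ->
  fcycle (papp s1) W -> fcycle (papp s2) W -> s1 = s2.
Proof.
move=> sz1 sz2 c1 c2; apply: (eq_from_nth (x0 := 0)) => [|i]; first by rewrite sz1 sz2.
rewrite sz1 => iN; have iW : i.+1 \in W by rewrite -iotaW mem_iota.
rewrite -[nth 0 s1 i]/(papp s1 i.+1) -[nth 0 s2 i]/(papp s2 i.+1).
by rewrite -(nextE c1 iW) (nextE c2 iW).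
Qed.

Lemma cyclicb_fcycle s : size s = N -> fcycle (papp s) W -> cyclicb N s.
Proof.
move=> szs cs; apply/cyclicbP; split.
  have Ds : s = map (papp s) (iota 1 N).
    apply: (eq_from_nth (x0 := 0)) => [|i]; first by rewrite size_map size_iota.
    by rewrite szs => iN; rewrite (nth_map 0) ?size_iota // nth_iota.
  have inj : {in iota 1 N &, injective (papp s)}.
    by move=> x y; rewrite !iotaW; apply: inj_cycle.
  have sub : {subset map (papp s) (iota 1 N) <= iota 1 N}.
    by move=> _ /mapP[x xN ->]; rewrite iotaW (mem_fcycle cs) -?iotaW.
  have us : uniq (map (papp s) (iota 1 N)) by rewrite map_inj_in_uniq ?iota_uniq.
  have szle : size (iota 1 N) <= size (map (papp s) (iota 1 N)) by rewrite size_map.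
  have [_ eqs] := uniq_min_size us sub szle.
  by rewrite /is_perm Ds uniq_perm ?iota_uniq.
move=> x xN; have x1 : 1 \in W by rewrite -iotaW mem_iota; move: xN; rewrite mem_iota; lia.
have := perm_traject_fcycle cs x1; rewrite (size_is_perm W_perm) => /perm_mem ->.
by rewrite -iotaW.
Qed.
End CycleOneLine.

Definition glue_oneline (n : nat) (tau sigma : seq nat) : seq nat :=
  [seq (if x == n then head 0 tau + n else x) | x <- sigma] ++
  n :: [seq y + n | y <- behead tau].

Section GlueOneLine.
Variables (n m : nat) (tau sigma : seq nat).
Hypotheses (size_sigma : size sigma = n) (size_tau : size tau = m) (m_gt0 : 0 < m).
Let E := glue_oneline n tau sigma.

Lemma size_glue_oneline : size E = n + m.
Proof. by rewrite size_cat /= !size_map size_behead size_sigma size_tau; lia. Qed.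

Lemma nth_glue_low q : q < n ->
  nth 0 E q = if nth 0 sigma q == n then head 0 tau + n else nth 0 sigma q.
Proof. by move=> qn; rewrite nth_cat size_map size_sigma qn (nth_map 0) ?size_sigma. Qed.

Lemma nth_glue_mid : nth 0 E n = n.
Proof. by rewrite nth_cat size_map size_sigma ltnn subnn. Qed.

Lemma nth_glue_high q : n < q < n + m -> nth 0 E q = nth 0 tau (q - n) + n.
Proof.
move=> qnm; rewrite nth_cat size_map size_sigma ifF; last lia.
have -> : q - n = (q - n).-1.+1 by lia.
by rewrite /= (nth_map 0) ?size_behead ?size_tau ?nth_behead //; lia.
Qed.
End GlueOneLine.

Section Glue.
Variables (n m : nat) (sigma tau : seq nat).
Hypotheses (sigma_cyc : cyclicb n sigma) (tau_cyc : cyclicb m tau).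
Hypotheses (n_gt0 : 0 < n) (m_gt0 : 0 < m).

Let f := papp sigma.
Let g := papp tau.
Let E := glue_oneline n tau sigma.
Let T := traject g m m.
Let p := index 1 T.
Let W := odot T (traject f n n).

Let n_in : 0 < n <= n. Proof. by rewrite n_gt0 leqnn. Qed.
Let m_in : 0 < m <= m. Proof. by rewrite m_gt0 leqnn. Qed.

Let sigma_perm : is_perm n sigma. Proof. by case/cyclicbP: sigma_cyc. Qed.
Let tau_perm : is_perm m tau. Proof. by case/cyclicbP: tau_cyc. Qed.
Let size_sigma : size sigma = n := size_is_perm sigma_perm.
Let size_tau : size tau = m := size_is_perm tau_perm.
Let T_perm : perm_eq T (iota 1 m).
Proof. exact: perm_traject_cyclic tau_cyc m_gt0 m m_in. Qed.

Let p_lt_m : p < m.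
Proof. by rewrite -[m in _ < m](size_traject g m) index_mem (mem_is_perm T_perm). Qed.

Let iter_g_p : iter p g m = 1.
Proof. by rewrite -(nth_traject _ p_lt_m) nth_index // (mem_is_perm T_perm). Qed.

Let iter_g_neq1 j : j < m -> j != p -> iter j g m != 1.
Proof.
move=> jm; apply: contra_neq; rewrite -iter_g_p -(nth_traject _ jm) -(nth_traject _ p_lt_m).
by move/eqP; rewrite nth_uniq ?size_traject ?(uniq_is_perm T_perm) // => /eqP.
Qed.

Let papp_glue_high t : 1 < t <= m -> papp E (t + n) = g t + n.
Proof.
move=> tm; rewrite /papp (nth_glue_high size_sigma size_tau) //; last lia.
by congr (nth _ _ _ + _); lia.
Qed.

Let papp_glue_mid : papp E n.+1 = n.
Proof. exact: nth_glue_mid size_sigma. Qed.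

Let papp_glue_low v : 0 < v <= n ->
  papp E v = if f v == n then g 1 + n else f v.
Proof.
move=> vn; rewrite /papp (nth_glue_low _ size_sigma); last lia.
by rewrite /g /papp /= nth0.
Qed.

Let step_tau j : j < m -> j != p -> papp E (iter j g m + n) = iter j.+1 g m + n.
Proof.
move=> jm jp; have j1 := iter_g_neq1 jm jp.
have jin : 0 < iter j g m <= m := iter_is_perm tau_perm j m_in.
by rewrite papp_glue_high //; lia.
Qed.

Let S_perm : perm_eq (traject f n n) (iota 1 n).
Proof. exact: perm_traject_cyclic sigma_cyc n_gt0 n n_in. Qed.

Let iter_f_neqn k : 0 < k < n -> iter k f n != n.
Proof.
move=> kn; rewrite -[X in _ != X](nth_traject f n_gt0) -(nth_traject _ (_ : k < n)); last lia.
by rewrite nth_uniq ?size_traject ?(uniq_is_perm S_perm); lia.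
Qed.

Let step_sigma i : i.+1 < n -> papp E (iter i f n) = iter i.+1 f n.
Proof.
move=> ilt; have iin : 0 < iter i f n <= n := iter_is_perm sigma_perm i n_in.
have kn : 0 < i.+1 < n by rewrite ilt.
by rewrite papp_glue_low // (negbTE (iter_f_neqn kn)).
Qed.

Let traject_head : traject (papp E) (m + n) p.+1 = map (addn^~ n) (traject g m p.+1).
Proof. by apply: (traject_conj (h := addn^~ n)) => i ip; apply: step_tau; lia. Qed.

Let iter_head : iter p.+1 (papp E) (m + n) = n.
Proof.
rewrite iterS (iter_conj (h := addn^~ n) (g := g) (x := m)) => [|i ip].
  by rewrite iter_g_p add1n papp_glue_mid.
by apply: step_tau; lia.
Qed.

Let traject_sigma : traject (papp E) n n = traject f n n.
Proof. by rewrite -[RHS]map_id; apply: (traject_conj (h := id)) => i; apply: step_sigma. Qed.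

Let iter_sigma : iter n (papp E) n = iter p.+1 g m + n.
Proof.
rewrite -{1}(prednK n_gt0) iterS.
have /= -> := @iter_conj _ _ (papp E) f id n n.-1.
  2: by move=> i ilt; apply: step_sigma; lia.
have nin : 0 < iter n.-1 f n <= n := iter_is_perm sigma_perm _ n_in.
by rewrite papp_glue_low // -iterS prednK // iter_cyclic // eqxx iter_g_p.
Qed.

Let step_tail i : i < m - p.+1 ->
  papp E (iter i g (iter p.+1 g m) + n) = iter i.+1 g (iter p.+1 g m) + n.
Proof. by move=> ilt; rewrite -!iterD addSn; apply: step_tau; lia. Qed.

Let traject_tail : traject (papp E) (iter p.+1 g m + n) (m - p.+1) =
  map (addn^~ n) (traject g (iter p.+1 g m) (m - p.+1)).
Proof. by apply: (traject_conj (h := addn^~ n)) => i ilt; apply: step_tail; lia. Qed.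

Let iter_tail : iter (m - p.+1) (papp E) (iter p.+1 g m + n) = n + m.
Proof.
rewrite (iter_conj (h := addn^~ n) (g := g)) => [|i]; last exact: step_tail.
by rewrite -iterD subnK // iter_cyclic // addnC.
Qed.

Lemma odot_traject_glue : W = traject (papp E) (n + m) (n + m).
Proof.
rewrite /W /odot size_traject -/T -/p take_traject // drop_traject //.
rewrite [X in traject (papp E) X _]addnC (_ : n + m = p.+1 + (n + (m - p.+1))); last lia.
by rewrite !trajectD traject_head iter_head traject_sigma iter_sigma traject_tail.
Qed.

Lemma iter_glue : iter (n + m) (papp E) (n + m) = n + m.
Proof.
rewrite [X in iter _ (papp E) X]addnC.
rewrite [X in iter X](_ : n + m = (m - p.+1) + (n + p.+1)); last lia.
by rewrite !iterD iter_head iter_sigma iter_tail.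
Qed.

Lemma perm_odot : perm_eq W (iota 1 (n + m)).
Proof.
rewrite /W /odot size_traject perm_catCA -map_cat cat_take_drop iotaD.
apply: perm_cat S_perm _; rewrite addnC iotaDl (eq_map (addnC n)).
exact: perm_map.
Qed.

Lemma fcycle_glue_odot : fcycle (papp E) W.
Proof. by rewrite odot_traject_glue fcycle_trajectE ?addn_gt0 ?n_gt0 // iter_glue. Qed.

Lemma glue_onelineE : glue tau sigma = E.
Proof.
have W_head : head 0 W = n + m.
  by rewrite odot_traject_glue -(prednK (_ : 0 < n + m)) // addn_gt0 n_gt0.
rewrite /glue (theta_cyclic sigma_cyc) // (theta_cyclic tau_cyc) //.
apply: (eq_oneline_fcycle perm_odot) (fcycle_glue_odot).
- exact: size_theta_inv perm_odot.
- exact: size_glue_oneline size_sigma size_tau m_gt0.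
- exact: fcycle_theta_inv perm_odot W_head.
Qed.

Lemma cyclicb_glue : cyclicb (n + m) (glue tau sigma).
Proof.
rewrite glue_onelineE; apply: (cyclicb_fcycle perm_odot) fcycle_glue_odot.
exact: size_glue_oneline size_sigma size_tau m_gt0.
Qed.
End Glue.

Lemma contains321P s : reflect
  (exists i j k, [/\ i < j, j < k, k < size s, nth 0 s j < nth 0 s i & nth 0 s k < nth 0 s j])
  (contains321 s).
Proof.
apply: (iffP idP) => [/hasP[i _ /hasP[j _ /hasP[k]]]|[i [j [k [ij jk ks ji kj]]]]].
  by rewrite mem_iota => ks /and4P[ij jk ji kj]; exists i, j, k.
apply/hasP; exists i; first by rewrite mem_iota; lia.
apply/hasP; exists j; first by rewrite mem_iota; lia.
by apply/hasP; exists k; rewrite ?mem_iota ?ij ?jk ?ji ?kj.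
Qed.

Section GluePerm.
Variables (n m : nat) (tau sigma : seq nat).
Hypotheses (sigma_perm : is_perm n sigma) (tau_perm : is_perm m tau).
Hypotheses (n_gt0 : 0 < n) (m_gt0 : 0 < m).
Let E := glue_oneline n tau sigma.
Let size_sigma : size sigma = n := size_is_perm sigma_perm.
Let size_tau : size tau = m := size_is_perm tau_perm.

Lemma ltn_glue_low a b : a < n -> b < n ->
  (nth 0 E a < nth 0 E b) = (nth 0 sigma a < nth 0 sigma b).
Proof.
move=> an bn; rewrite !(nth_glue_low _ size_sigma) //.
have := nth_is_perm sigma_perm an; have := nth_is_perm sigma_perm bn.
by do 2 case: eqP; lia.
Qed.

Lemma leq_glue_high k : n <= k < n + m -> n <= nth 0 E k.
Proof.
case/andP; rewrite leq_eqVlt => /orP[/eqP <- _|nk km].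
  by rewrite (nth_glue_mid _ size_sigma).
by rewrite (nth_glue_high size_sigma size_tau) ?nk //; lia.
Qed.

(* This includes the position q < n of tau(1)+n, where the truncated q - n is 0. *)
Lemma nth_glue_gt q : q < n + m -> n < nth 0 E q -> nth 0 E q = nth 0 tau (q - n) + n.
Proof.
move=> qN; case: (ltngtP q n) => [qn|nq|->]; last by rewrite (nth_glue_mid _ size_sigma) ltnn.
- rewrite (nth_glue_low _ size_sigma) //; have := nth_is_perm sigma_perm qn.
  by case: eqP => [_ _ _|]; [rewrite (_ : q - n = 0) ?nth0 //; lia | lia].
- by rewrite (nth_glue_high size_sigma size_tau) // nq.
Qed.

Lemma glue_gt_pos i j : i < j -> n < nth 0 E i -> n < nth 0 E j -> n < j.
Proof.
move=> ij; case: (ltngtP j n) => // [jn|->]; last by rewrite (nth_glue_mid _ size_sigma) ltnn.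
have i_n : i < n by lia.
rewrite !(nth_glue_low _ size_sigma) //.
have := nth_is_perm sigma_perm i_n; have := nth_is_perm sigma_perm jn.
case: eqP => [si|]; case: eqP => [sj|]; try lia.
move/eqP: sj; rewrite -si nth_uniq ?size_sigma ?(uniq_is_perm sigma_perm) //; lia.
Qed.

Lemma avoids321_glue : avoids321 sigma -> avoids321 tau -> avoids321 E.
Proof.
move=> /contains321P sA /contains321P tA; apply/contains321P.
move=> [i [j [k [ij jk kN ji kj]]]].
rewrite (size_glue_oneline size_sigma size_tau m_gt0) in kN.
have [kn|nk] := ltnP k n.
  apply: sA; exists i, j, k; rewrite size_sigma -!ltn_glue_low; try lia.
  by split.
have Ek : n <= nth 0 E k by apply: leq_glue_high; rewrite nk.
have Ej : n < nth 0 E j := leq_ltn_trans Ek kj.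
have Ei : n < nth 0 E i := ltn_trans Ej ji.
have nj : n < j := glue_gt_pos ij Ei Ej.
have nk' : n < k := ltn_trans nj jk.
have Ek' : n < nth 0 E k.
  have km : k - n < m by lia.
  rewrite (nth_glue_high size_sigma size_tau) ?nk' //.
  by have := nth_is_perm tau_perm km; lia.
move: ji kj; rewrite (nth_glue_gt _ Ei) ?(nth_glue_gt _ Ej) ?(nth_glue_gt _ Ek'); try lia.
move=> ji kj; apply: tA; exists (i - n), (j - n), (k - n).
by rewrite size_tau; split; lia.
Qed.

Lemma take_glue : map (minn n) (take n E) = sigma.
Proof.
rewrite take_size_cat ?size_map // -map_comp map_id_in // => x.
rewrite (mem_is_perm sigma_perm) => /andP[_ xn] /=.
by case: eqP => [->|_]; [apply/minn_idPl; rewrite leq_addl | apply/minn_idPr].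
Qed.

Lemma filter_glue : [seq x - n | x <- E & n < x] = tau.
Proof.
have tau0 : 0 < head 0 tau by rewrite -nth0; have := nth_is_perm tau_perm m_gt0; lia.
have sigma_n : [seq x <- sigma | n < (if x == n then head 0 tau + n else x)] = [:: n].
  rewrite -(filter_pred1_uniq (uniq_is_perm sigma_perm)) ?(mem_is_perm sigma_perm) ?n_gt0 ?leqnn //.
  apply: eq_in_filter => x; rewrite (mem_is_perm sigma_perm) /=.
  by case: eqP; lia.
have tail_gt : all (fun x => n < x) [seq y + n | y <- behead tau].
  rewrite all_map; apply/allP => y /mem_behead; rewrite (mem_is_perm tau_perm) /=; lia.
rewrite /E /glue_oneline filter_cat filter_map sigma_n /= ltnn (all_filterP tail_gt).
rewrite -map_comp eqxx addnK (eq_map (addnK n)) map_id.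
by case: (tau) size_tau m_gt0 => [<-|].
Qed.
End GluePerm.

Lemma glue_inj n m sigma1 sigma2 tau1 tau2 : 0 < n -> 0 < m ->
  cyclicb n sigma1 -> cyclicb n sigma2 -> cyclicb m tau1 -> cyclicb m tau2 ->
  glue tau1 sigma1 = glue tau2 sigma2 -> tau1 = tau2 /\ sigma1 = sigma2.
Proof.
move=> n0 m0 c1 c2 d1 d2; rewrite (glue_onelineE c1 d1) // (glue_onelineE c2 d2) // => e.
have [[p1 _] [p2 _]] := (cyclicbP _ _ c1, cyclicbP _ _ c2).
have [[q1 _] [q2 _]] := (cyclicbP _ _ d1, cyclicbP _ _ d2).
split.
- by rewrite -(filter_glue p1 q1 n0 m0) e (filter_glue p2 q2 n0 m0).
- by rewrite -(take_glue tau1 p1) e (take_glue tau2 p2).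
Qed.

Lemma C321_glue n m sigma tau : 0 < n -> 0 < m -> C321 n sigma -> C321 m tau ->
  C321 (n + m) (glue tau sigma).
Proof.
move=> n0 m0 /andP[cs As] /andP[ct At]; rewrite /C321 cyclicb_glue //=.
have [ps _] := cyclicbP _ _ cs; have [pt _] := cyclicbP _ _ ct.
by rewrite (glue_onelineE cs ct) // (avoids321_glue ps pt n0 m0 As At).
Qed.

Lemma c_mul_leq n m : 0 < n -> 0 < m -> c n * c m <= c (n + m).
Proof.
move=> n0 m0; rewrite /c -!size_filter -(size_allpairs (fun s t => glue t s)).
apply: uniq_leq_size.
- apply: allpairs_uniq; try exact/filter_uniq/permutations_uniq.
  move=> [s1 t1] [s2 t2] /allpairsP[[x1 y1] [/= + + [-> ->]]].
  move=> /[!mem_filter] /andP[C1 _] /andP[D1 _] /allpairsP[[x2 y2] [/= + + [-> ->]]].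
  move=> /[!mem_filter] /andP[C2 _] /andP[D2 _] /= e.
  by have [-> ->] := glue_inj n0 m0 (andP C1).1 (andP C2).1 (andP D1).1 (andP D2).1 e.
- move=> _ /allpairsP[[x y] [/= + + ->]] => /[!mem_filter] /andP[Cx _] /andP[Cy _].
  have C := C321_glue n0 m0 Cx Cy.
  by rewrite C mem_permutations; case/andP: C => /andP[].
Qed.

Theorem mainTheorem8 (n m : nat) :
  1 <= n -> 1 <= m ->
  c n * c m <= c (n + m) /\
  (forall (sigma1 sigma2 tau1 tau2 : seq nat),
     C321 n sigma1 -> C321 n sigma2 -> C321 m tau1 -> C321 m tau2 ->
     glue tau1 sigma1 = glue tau2 sigma2 ->
     tau1 = tau2 /\ sigma1 = sigma2).
Proof.
move=> n0 m0; split; first exact: c_mul_leq.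
move=> s1 s2 t1 t2 /andP[c1 _] /andP[c2 _] /andP[d1 _] /andP[d2 _].
exact: (glue_inj n0 m0 c1 c2 d1 d2).
Qed.
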